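(* Let $G$ be a finite simple graph, $S\subseteq V(G)$, and $t\ge 3$. Suppose $G\setminus S$ is isomorphic to the graph $G_{n,t}$ for some $n\ne 3,5$ with $t>\lceil n/2\rceil$. Then $\mathrm{CF}_t(\mathrm{Cl}(G,S,t))$ is not shellable.
   Context: $G_{n,t}$: start with the complete graph $K_n$ on $y_1,\dots,y_n$; for each $1\le i\le n$ add $t-2$ new vertices $x_{i,1},\dots,x_{i,t-2}$ and make $\{y_i,y_{i+1},x_{i,1},\dots,x_{i,t-2}\}$ a clique (indices of $y$ modulo $n$); there are no other edges. $\mathrm{Cl}(G,S,t)$ is the graph obtained from $G$ by attaching, simultaneously for each $v\in S$, a clique $K_v$ with $v\in V(K_v)$ and $|V(K_v)|\ge t$, whose other vertices are new, with $K_u,K_v$ vertex-disjoint for $u\ne v$. $G\setminus S$ is the induced subgraph on $V(G)\setminus S$. $\mathrm{CF}_t(\cdot)$ is the simplicial complex on the vertex set whose faces are the vertex subsets inducing no $t$-clique. A simplicial complex is shellable if its facets admit an order $F_1,\dots,F_s$ such that for all $i<j$ there exist $v\in F_j\setminus F_i$ and $\ell<j$ with $F_j\setminus F_\ell=\{v\}$. *)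

From mathcomp Require Import all_boot.
Set Implicit Arguments. Unset Strict Implicit. Unset Printing Implicit Defensive.


(* vertices: y_i  = inl i  (i < n),
             x_{i,a} = inr (i, a)  (i < n, a < t-2)                       *)
Definition Gnt_vert (n t : nat) : finType := ('I_n + ('I_n * 'I_(t - 2)))%type.

(* y_i ~ y_j iff i <> j (complete graph K_n);
   {y_i, y_{i+1 mod n}, x_{i,1..t-2}} is a clique; no other edges. *)
Definition Gnt_adj (n t : nat) : rel (Gnt_vert n t) :=
  fun u w =>
  match u, w with
  | inl i, inl j => i != j
  | inl i, inr (j, _) => ((i : nat) == j) || ((i : nat) == j.+1 %% n)
  | inr (j, _), inl i => ((i : nat) == j) || ((i : nat) == j.+1 %% n)
  | inr (i, a), inr (j, b) => (i == j) && (a != b)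
  end.

Definition induced_iso_Gnt (T : finType) (e : rel T) (S : {set T}) (n t : nat) :=
  exists f : Gnt_vert n t -> T,
    [/\ injective f,
        (forall x, x \notin S <-> exists a, f a = x) &
        (forall a b, e (f a) (f b) = Gnt_adj a b)].

(* For each v in S we add m v new vertices, forming with v a clique K_v of
   size (m v).+1; vertices outside S get no new vertices. *)
Definition newcount (T : finType) (S : {set T}) (m : T -> nat) (v : T) : nat :=
  if v \in S then m v else 0.

Definition Cl_vert (T : finType) (S : {set T}) (m : T -> nat) : finType :=
  (T + {v : T & 'I_(newcount S m v)})%type.

Definition Cl_adj (T : finType) (e : rel T) (S : {set T}) (m : T -> nat)
  : rel (Cl_vert S m) :=
  fun u w =>
  match u, w with
  | inl a, inl b => e a b
  | inl a, inr q => a == tag q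
  | inr p, inl a => a == tag p
  | inr p, inr q => (tag p == tag q) && (p != q)
  end.

Definition is_clique (U : finType) (r : rel U) (K : {set U}) : Prop :=
  {in K &, forall x y, x != y -> r x y}.

Definition CF_face (U : finType) (r : rel U) (t : nat) (F : {set U}) : Prop :=
  ~ exists K : {set U}, [/\ K \subset F, #|K| = t & is_clique r K].

Definition facet (U : finType) (face : {set U} -> Prop) (F : {set U}) : Prop :=
  face F /\ forall G : {set U}, face G -> F \subset G -> G = F.

Definition shellable (U : finType) (face : {set U} -> Prop) : Prop :=
  exists s : seq {set U},
    [/\ uniq s,
        (forall F, F \in s <-> facet face F) &
        (forall i j, i < j -> j < size s ->
           exists v, v \in nth set0 s j :\: nth set0 s i /\
             exists l, l < j /\ nth set0 s j :\: nth set0 s l = [set v])].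
Arguments Cl_adj {T} e S m.
Arguments CF_face {U} r t F.

From mathcomp Require Import all_boot zify.
Set Implicit Arguments. Unset Strict Implicit. Unset Printing Implicit Defensive.

(* Let K consist of t-1 new vertices of every attached clique, X of all the
   vertices x_(i,a), and, with k = n/2 (rounded down), let
   J_a = {y_a, y_(a+2), ..., y_(a+2k-2)} (indices mod n).  Since t > k, the sets
   F_a = K u X u J_a are faces, and they are facets: a face containing K avoids
   S, and a face containing X has no two cyclically consecutive y's, because
   {y_i, y_(i+1), x_(i,1), ..., x_(i,t-2)} is a t-clique.
   In a shelling, a facet F_a preceded by some F_b arises from an earlier facet
   H with F_a \ H = {v}, v in J_a \ J_b.  Then H contains J_a \ {v} and some y
   outside J_a, with no two consecutive y's; this forces n = 2k+1 and either
   v = y_a, H = F_(a+2) or v = y_(a-3), H = F_(a-2).  Now let F_c be the last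
   F_a in the shelling.  F_(c+2) and F_(c-2) both precede it; when n >= 7,
   exchanging the later of the two must produce H = F_c, which comes too late. *)

Lemma clique_setU1 (U : finType) (r : rel U) (z : U) (K : {set U}) :
  symmetric r -> is_clique r K -> {in K, forall w, w != z -> r z w} ->
  is_clique r (z |: K).
Proof.
move=> r_sym cK zK x y /setU1P[->|xK] /setU1P[->|yK]; rewrite ?eqxx // => xy.
- by apply: zK; rewrite // eq_sym.
- by rewrite r_sym; apply: zK.
- exact: cK.
Qed.

Section AttachedCliques.
Variables (T : finType) (e : rel T) (S : {set T}) (m : T -> nat) (t : nat).
Hypotheses (e_sym : symmetric e) (t_gt0 : 0 < t).
Hypothesis m_ge : forall v, v \in S -> t <= (m v).+1.

Local Notation V := (Cl_vert S m).
Local Notation adj := (Cl_adj e S m).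
Local Notation face := (CF_face adj t).

Lemma Cl_adj_sym : symmetric adj.
Proof. by move=> [a|p] [b|q] //=; rewrite ?e_sym // eq_sym [q == p]eq_sym. Qed.

Lemma tag_in_S (q : {v : T & 'I_(newcount S m v)}) : tag q \in S.
Proof. by case: q => v; rewrite /newcount; case: ifP => // _ []. Qed.

(* With v, the t-1 vertices of K_v of index < t-1 form a t-clique. *)
Definition Ks : {set V} := [set u : V | if u is inr q then tagged q < t.-1 else false].

Definition Kv (v : T) : {set V} := [set u in Ks | if u is inr q then tag q == v else false].

Definition outS : {set V} := [set inl x | x in ~: S].

Lemma Kv_sub v : Kv v \subset Ks.
Proof. by apply/subsetP => u; rewrite inE => /andP[]. Qed.

Lemma card_Kv v : v \in S -> #|Kv v| = t.-1.
Proof.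
move=> vS; have le_t : t.-1 <= newcount S m v by rewrite /newcount vS; have := m_ge vS; lia.
pose emb (o : 'I_t.-1) : V := inr (Tagged _ (widen_ord le_t o)).
have emb_inj : injective emb.
  move=> o o' /(congr1 (fun u : V => if u is inr q then val (tagged q) else 0)) eq_oo'.
  exact: val_inj.
suff -> : Kv v = [set emb o | o in 'I_t.-1] by rewrite card_imset // card_ord.
apply/setP => u; apply/idP/imsetP => [|[o _ ->]]; last by rewrite !inE /= ltn_ord eqxx.
case: u => [x|[w o]]; rewrite !inE //= => /andP[lt_o /eqP wv]; subst w.
by exists (Ordinal lt_o) => //; congr (inr (Tagged _ _)); apply: val_inj.
Qed.

Lemma clique_Kv v : is_clique adj (Kv v).
Proof.
move=> [x|q] [y|q']; rewrite !inE //= => /andP[_ /eqP qv] /andP[_ /eqP q'v] ne.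
by rewrite qv q'v eqxx; apply: contra ne => /eqP ->.
Qed.

Lemma face_apex_Kv (H : {set V}) v z : face H -> v \in S -> Kv v \subset H ->
  z \in H -> z \notin Kv v -> {in Kv v, forall w, adj z w} -> False.
Proof.
move=> fH vS sH zH zK zadj; apply: fH; exists (z |: Kv v); split.
- by rewrite subUset sub1set zH.
- by rewrite cardsU1 zK card_Kv //; lia.
- apply: clique_setU1; [exact: Cl_adj_sym | exact: clique_Kv | by move=> w wK _; apply: zadj].
Qed.

Lemma face_vertex (H : {set V}) u : face H -> Ks \subset H -> u \in H ->
  u \in Ks \/ exists2 x, x \notin S & u = inl x.
Proof.
move=> fH sH uH; have sKv v : Kv v \subset H := subset_trans (Kv_sub v) sH.
case: u uH => [x|q] uH.
  case: (boolP (x \in S)) => xS; last by right; exists x.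
  exfalso; apply: (face_apex_Kv fH xS (sKv x) uH); first by rewrite !inE.
  by move=> [y|q]; rewrite !inE //= => /andP[_ /eqP ->].
case: (boolP (inr q \in Ks)) => qK; [by left | exfalso].
apply: (face_apex_Kv fH (tag_in_S q) (sKv _) uH); first by rewrite inE (negbTE qK).
move=> [y|q']; rewrite inE ?andbF // => /andP[q'K /eqP qq'] /=; rewrite qq' eqxx /=.
by apply: contraNneq qK => ->.
Qed.

Lemma clique_new_card (K : {set V}) q : is_clique adj K -> K \subset Ks :|: outS ->
  inr q \in K -> #|K| <= t.-1.
Proof.
move=> cK /subsetP sK qK; rewrite -(card_Kv (tag_in_S q)); apply: subset_leq_card.
have qKs : inr q \in Ks by have := sK _ qK; rewrite in_setU => /orP[// | /imsetP[]].
apply/subsetP => u uK; case: (eqVneq u (inr q)) => [->|uq]; first by rewrite inE qKs eqxx.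
have := cK _ _ qK uK; rewrite eq_sym => /(_ uq).
have := sK _ uK; case: u {uK uq} => [x|q'] /setUP[].
- by rewrite inE.
- case/imsetP=> y; rewrite inE => yS [->] /= /eqP yq; by move: yS; rewrite yq tag_in_S.
- by move=> q'K /andP[/eqP qq' _]; rewrite inE q'K qq' eqxx.
- by case/imsetP.
Qed.

Section GntComplement.
Variables (n : nat) (f : Gnt_vert n t -> T).
Hypotheses (n_ge3 : 3 <= n) (n_ne35 : n != 3 /\ n != 5) (t_gt : (n.+1)./2 < t).
Hypothesis f_inj : injective f.
Hypothesis f_img : forall x, x \notin S <-> exists g, f g = x.
Hypothesis f_adj : forall g h, e (f g) (f h) = Gnt_adj g h.

Local Notation k := n./2.

Lemma n_gt0 : 0 < n. Proof. by apply: leq_trans n_ge3. Qed.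

(* [yv q] is y_(q mod n), indexed from 0. *)
Definition yv (q : nat) : V := inl (f (inl (Ordinal (ltn_pmod q n_gt0)))).
Definition xv (p : 'I_n * 'I_(t - 2)) : V := inl (f (inr p)).

Definition Xs : {set V} := [set xv p | p : 'I_n * 'I_(t - 2)].
Definition J (a : nat) : {set V} := [set yv (a + i.*2) | i : 'I_k].
Definition F (a : nat) : {set V} := Ks :|: Xs :|: J a.

Definition cycle_stable (H : {set V}) := forall q, yv q \in H -> yv q.+1 \in H -> False.

Lemma f_notin_S g : f g \notin S. Proof. by apply/f_img; exists g. Qed.

Lemma yv_eq x y : (yv x == yv y) = (x == y %[mod n]).
Proof.
apply/eqP/eqP => [[/f_inj [] //] | eq_xy].
by congr (inl (f (inl _))); apply: val_inj; rewrite /= eq_xy.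
Qed.

Lemma yv_ord (i : 'I_n) : inl (f (inl i)) = yv i.
Proof. by congr (inl (f (inl _))); apply: val_inj; rewrite /= modn_small. Qed.

Lemma yv_mod x : yv (x %% n) = yv x.
Proof. by apply/eqP; rewrite yv_eq modn_mod. Qed.

Lemma yv_wrap x y : x = y + n -> yv x = yv y.
Proof. by move=> ->; apply/eqP; rewrite yv_eq modnDr. Qed.

Lemma yv_succ x y : yv x = yv y -> yv x.+1 = yv y.+1.
Proof.
move/eqP; rewrite yv_eq => /eqP eq_xy; apply/eqP.
by rewrite yv_eq -[x.+1]addn1 -[y.+1]addn1 -modnDml eq_xy modnDml.
Qed.

Lemma yv_offset a q : exists2 d, d < n & yv q = yv (a + d).
Proof.
exists ((q + (n - a %% n)) %% n); first exact: ltn_pmod n_gt0.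
apply/eqP; rewrite yv_eq modnDmr -modnDml addnCA subnKC ?modnDr //.
by rewrite ltnW // ltn_pmod // n_gt0.
Qed.

Lemma eq_yvD a x y : x < n -> y < n -> (yv (a + x) == yv (a + y)) = (x == y).
Proof. by move=> xn yn; rewrite yv_eq eqn_modDl !modn_small. Qed.

Lemma mem_J a d : d < n -> (yv (a + d) \in J a) = ~~ odd d && (d < k.*2).
Proof.
move=> dn; apply/imsetP/andP => [[i _ /eqP] | [ev_d lt_dk]].
  have lt_in : i.*2 < n by have := ltn_ord i; lia.
  by rewrite eq_yvD // => /eqP ->; rewrite odd_double ltn_double.
have lt_dk' : d./2 < k by lia.
by exists (Ordinal lt_dk') => //=; congr (yv (a + _)); lia.
Qed.

Lemma adj_yv r r' : adj (yv r) (yv r') = (yv r != yv r').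
Proof. by rewrite /= f_adj yv_eq. Qed.

Lemma adj_xv_yv p r : adj (xv p) (yv r) = (yv r == yv p.1) || (yv r == yv p.1.+1).
Proof. by case: p => j b; rewrite /= f_adj /= !yv_eq (modn_small (ltn_ord j)). Qed.

Lemma adj_xv p p' : adj (xv p) (xv p') = (p.1 == p'.1) && (p.2 != p'.2).
Proof. by case: p p' => [j b] [j' b']; rewrite /= f_adj. Qed.

Lemma yv_notin_Xs r : yv r \notin Xs.
Proof. by apply/imsetP => -[p _ [/f_inj]]. Qed.

Lemma face_stable (H : {set V}) : face H -> Xs \subset H -> cycle_stable H.
Proof.
move=> fH sXH q yqH yq1H; apply: fH.
pose j := Ordinal (ltn_pmod q n_gt0).
have yv_j : yv j = yv q by rewrite yv_mod.
pose X := [set xv (j, b) | b : 'I_(t - 2)].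
have cX : is_clique adj X.
  move=> _ _ /imsetP[b _ ->] /imsetP[b' _ ->] ne.
  by rewrite adj_xv eqxx; apply: contraNneq ne => /= ->.
have yX r : yv r \notin X by apply: contra (yv_notin_Xs r) => /imsetP[b _ ->]; apply: imset_f.
have ne_q : yv q != yv q.+1.
  by have := @eq_yvD q 0 1 n_gt0 (leq_trans (isT : 1 < 3) n_ge3); rewrite addn0 addn1 => ->.
exists (yv q |: (yv q.+1 |: X)); split.
- rewrite !subUset !sub1set yqH yq1H /=; apply: subset_trans sXH.
  by apply/subsetP => _ /imsetP[b _ ->]; apply: imset_f.
- rewrite !cardsU1 in_setU1 (negbTE ne_q) (negbTE (yX _)) (negbTE (yX _)) card_imset.
    by rewrite card_ord; lia.
  by move=> b b' [/f_inj [->]].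
- apply: clique_setU1; [exact: Cl_adj_sym | apply: clique_setU1 | ].
  + exact: Cl_adj_sym.
  + exact: cX.
  + by move=> _ /imsetP[b _ ->] _; rewrite Cl_adj_sym adj_xv_yv /= (yv_succ yv_j) eqxx orbT.
  + move=> w /setU1P[-> _ | /imsetP[b _ ->] _]; first by rewrite adj_yv.
    by rewrite Cl_adj_sym adj_xv_yv /= yv_j eqxx.
Qed.

Lemma J_wrap a : J (a + n) = J a.
Proof. by apply: eq_imset => i; apply: yv_wrap; rewrite addnAC. Qed.

Lemma J_mod a : J (a %% n) = J a.
Proof. by apply: eq_imset => i; apply/eqP; rewrite yv_eq modnDml. Qed.

Lemma F_wrap a : F (a + n) = F a. Proof. by rewrite /F J_wrap. Qed.

Lemma F_mod a : F (a %% n) = F a. Proof. by rewrite /F J_mod. Qed.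

Lemma J_stable a : cycle_stable (J a).
Proof.
move=> q; have [d dn yq] := yv_offset a q; rewrite (yv_succ yq) yq.
case: (ltnP d.+1 n) => [d1n | nd1]; first by rewrite -addnS !mem_J //; lia.
by rewrite (@yv_wrap (a + d).+1 (a + 0)) ?mem_J //; [lia | exact: n_gt0 | lia].
Qed.

Lemma J_max_stable a (H : {set V}) q : cycle_stable H -> J a \subset H ->
  yv q \in H -> yv q \in J a.
Proof.
move=> sH /subsetP sJH; have [d dn ->] := yv_offset a q => yH; rewrite mem_J //.
case: (boolP (odd d)) => od /=.
  exfalso; apply: (sH (a + d.-1)); first by apply: sJH; rewrite mem_J; lia.
  by rewrite (_ : (a + d.-1).+1 = a + d) //; lia.
case: (ltnP d k.*2) => // dk; exfalso; apply: (sH (a + d)) => //.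
by rewrite (@yv_wrap (a + d).+1 (a + 0)); [apply: sJH; rewrite mem_J; [lia | exact: n_gt0] | lia].
Qed.

Lemma J_add2 a : n = k.*2.+1 -> J (a + 2) \subset yv (a + k.*2) |: (J a :\ yv a).
Proof.
move=> nk; apply/subsetP => _ /imsetP[i _ ->]; have ik := ltn_ord i; rewrite -addnA.
case: (ltnP i.+1 k) => ik1; last by rewrite (_ : 2 + i.*2 = k.*2) ?setU11 //; lia.
rewrite setU1r // in_setD1 -{2}(addn0 a) eq_yvD ?mem_J; lia.
Qed.

Lemma J_sub2 a : n = k.*2.+1 ->
  J (a + (k.*2 - 1)) \subset yv (a + (k.*2 - 1)) |: (J a :\ yv (a + (k.*2 - 2))).
Proof.
move=> nk; apply/subsetP => _ /imsetP[i _ ->]; have ik := ltn_ord i.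
case: (posnP i) => [-> | i_gt0]; first by rewrite addn0 setU11.
rewrite (@yv_wrap _ (a + (i.-1).*2)); last by lia.
rewrite setU1r // in_setD1 eq_yvD ?mem_J; lia.
Qed.

(* Both cycle neighbours of [yv q] must be missing from [H], which contains all
   of [J a] but [v]: only the gap y_(a-2), y_(a-1) of [J a] for odd [n] allows it. *)
Lemma J_exchange a v q (H : {set V}) : cycle_stable H ->
  {in J a, forall w, w != v -> w \in H} -> yv q \in H -> yv q \notin J a ->
  n = k.*2.+1 /\
  (v = yv a /\ yv q = yv (a + k.*2) \/
   v = yv (a + (k.*2 - 2)) /\ yv q = yv (a + (k.*2 - 1))).
Proof.
move=> sH sJH; have [d dn ->] := yv_offset a q => qH; rewrite mem_J // => qJ.
have inH d' : d' < n -> ~~ odd d' -> d' < k.*2 -> yv (a + d') != v -> yv (a + d') \in H.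
  by move=> d'n ev lt ne; apply: sJH ne; rewrite mem_J // ev.
have wrap_d : n = d.+1 -> yv (a + d).+1 = yv (a + 0) by move=> nd; apply: yv_wrap; lia.
case: (boolP (odd d)) => od.
  have v_pred : v = yv (a + d.-1).
    apply/eqP; rewrite eq_sym; apply/negPn/negP => ne.
    apply: (sH (a + d.-1)); first by apply: inH ne; lia.
    by rewrite (_ : (a + d.-1).+1 = a + d) //; lia.
  have dk : d = k.*2 - 1.
    case: (ltnP d.+1 k.*2) => [dk | ]; last by lia.
    exfalso; apply: (sH (a + d)) => //; rewrite -addnS; apply: inH; try lia.
    by rewrite v_pred eq_yvD; lia.
  have nk : n = k.*2.+1.
    case: (eqVneq n k.*2) => [nk | ]; last by lia.
    exfalso; apply: (sH (a + d)) => //; rewrite wrap_d; last by lia.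
    by apply: inH; rewrite ?v_pred ?eq_yvD; lia.
  by split => //; right; rewrite v_pred dk; split; congr (yv (a + _)); lia.
have [dk nk] : d = k.*2 /\ n = k.*2.+1 by lia.
split => //; left; split; last by rewrite dk.
apply/eqP; rewrite eq_sym -(addn0 a); apply/negPn/negP => ne.
by apply: (sH (a + d)) => //; rewrite wrap_d; [apply: inH ne; lia | lia].
Qed.

Lemma F_sub_outS a : F a \subset Ks :|: outS.
Proof.
rewrite /F -setUA setUS //; apply/subsetP => _ /setUP[] /imsetP[? _ ->];
  by apply: imset_f; rewrite inE f_notin_S.
Qed.

Lemma card_J a : #|J a| <= k.
Proof. by rewrite -[k]card_ord leq_imset_card. Qed.

Lemma clique_xv_card (K : {set V}) a p : is_clique adj K -> K \subset Xs :|: J a ->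
  xv p \in K -> #|K| <= t.-1.
Proof.
move=> cK /subsetP sK pK; case: p pK => j b pK.
pose X := [set xv (j, b') | b' : 'I_(t - 2)].
pose y_side := if yv j \in J a then yv j else yv j.+1.
have sKX : K \subset y_side |: X.
  apply/subsetP => u uK; case: (eqVneq u (xv (j, b))) => [-> | ub].
    by apply/setU1P; right; apply: imset_f.
  have := cK _ _ pK uK; rewrite eq_sym => /(_ ub).
  case/setUP: (sK _ uK) => [/imsetP[[j' b'] _ ->] | uJ].
    by rewrite adj_xv /= => /andP[/eqP <- _]; apply/setU1P; right; apply: imset_f.
  case/imsetP: (uJ) => i _ Eu; subst u; rewrite adj_xv_yv /= => /orP[] /eqP yj; rewrite yj in uJ *;
    rewrite /y_side; first by rewrite uJ setU11.
  by case: ifP => [yjJ | _]; [case: (J_stable yjJ uJ) | rewrite setU11].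
have cX : #|X| <= t - 2 by rewrite -[t - 2]card_ord leq_imset_card.
by have := subset_leq_card sKX; rewrite cardsU1; lia.
Qed.

Lemma faceF a : face (F a).
Proof.
move=> [K [sKF cardK cK]].
have [q qK | no_new] := pickP [pred q | inr q \in K].
  by have := clique_new_card cK (subset_trans sKF (F_sub_outS a)) qK; lia.
have sK : K \subset Xs :|: J a.
  apply/subsetP => u uK; move: (subsetP sKF _ uK); rewrite /F -setUA => /setUP[] //.
  by case: u uK => [x _ | q qK _]; [rewrite inE | have := no_new q; rewrite /= qK].
have [p pK | no_xv] := pickP [pred p | xv p \in K].
  by have := clique_xv_card cK sK pK; lia.
have sKJ : K \subset J a.
  apply/subsetP => u uK; case/setUP: (subsetP sK _ uK) => // /imsetP[p _ Eu].
  by have := no_xv p; rewrite /= -Eu uK.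
by have := subset_leq_card sKJ; have := card_J a; lia.
Qed.

Lemma facetF a : facet face (F a).
Proof.
split=> [|G fG sFG]; first exact: faceF.
apply/eqP; rewrite eqEsubset sFG andbT; apply/subsetP => w wG.
move: sFG; rewrite !subUset => /andP[/andP[sKsG sXG] sJG].
case: (face_vertex fG sKsG wG) => [wKs | [_ /f_img[[i|p] <-] Ew]].
- by rewrite !in_setU wKs.
- by rewrite Ew yv_ord in_setU (J_max_stable (face_stable fG sXG) sJG) ?orbT // -yv_ord -Ew.
- by rewrite Ew !in_setU imset_f ?orbT.
Qed.

Lemma yv_in_F a x : (yv x \in F a) = (yv x \in J a).
Proof. by rewrite !in_setU (negbTE (yv_notin_Xs x)) [yv x \in Ks]inE. Qed.

Lemma F_neighbour (H : {set V}) a v : facet face H -> v \in J a ->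
  F a :\ v \subset H -> ~~ (H \subset F a) ->
  n = k.*2.+1 /\
  (v = yv a /\ H = F (a + 2) \/ v = yv (a + (k.*2 - 2)) /\ H = F (a + (k.*2 - 1))).
Proof.
move=> [fH _] vJ sFH nHF; have [r _ Ev] := imsetP vJ.
have inH w : w \in F a -> w != v -> w \in H.
  by move=> wF wv; apply: (subsetP sFH); rewrite in_setD1 wv.
have sKsH : Ks \subset H.
  apply/subsetP => w wKs; apply: inH; first by rewrite !in_setU wKs.
  by apply: contraTneq wKs => ->; rewrite Ev inE.
have sXsH : Xs \subset H.
  apply/subsetP => w wX; apply: inH; first by rewrite !in_setU wX orbT.
  by apply: contraTneq wX => ->; rewrite Ev yv_notin_Xs.
have sJH : {in J a, forall w, w != v -> w \in H}.
  by move=> w wJ; apply: inH; rewrite in_setU wJ orbT.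
have [u uH uF] := subsetPn nHF.
have [q Eu] : exists q, u = yv q.
  case: (face_vertex fH sKsH uH) => [uKs | [_ /f_img[[i|p] <-] Eu]].
  - by rewrite !in_setU uKs in uF.
  - by exists i; rewrite Eu yv_ord.
  - by rewrite Eu !in_setU imset_f ?orbT in uF.
subst u; rewrite yv_in_F in uF.
have FH a' w0 : J a' \subset w0 |: (J a :\ v) -> w0 \in H -> H = F a'.
  move=> sJ' w0H; apply: (facetF a').2 fH _; rewrite !subUset sKsH sXsH /=.
  apply: subset_trans sJ' _; rewrite subUset sub1set w0H /=.
  by apply/subsetP => w /setD1P[wv wJ]; apply: sJH.
have [nk [[Ev' Eq] | [Ev' Eq]]] := J_exchange (face_stable fH sXsH) sJH uH uF.
  by split => //; left; split => //; apply: (FH _ _ _ uH); rewrite Ev' Eq J_add2.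
by split => //; right; split => //; apply: (FH _ _ _ uH); rewrite Ev' Eq J_sub2.
Qed.

Section Shelling.
Variable s : seq {set V}.
Hypotheses (s_uniq : uniq s) (s_facets : forall F0, F0 \in s <-> facet face F0).
Hypothesis s_shell : forall i j, i < j -> j < size s ->
  exists v, v \in nth set0 s j :\: nth set0 s i /\
    exists l, l < j /\ nth set0 s j :\: nth set0 s l = [set v].

Lemma F_in_s a : F a \in s. Proof. exact/s_facets/facetF. Qed.

Lemma index_F_neq a b x : yv x \in J a -> yv x \notin J b -> index (F a) s != index (F b) s.
Proof.
move=> xa; apply: contraNneq => E.
by rewrite -yv_in_F -(nth_index set0 (F_in_s b)) -E nth_index ?F_in_s // yv_in_F.
Qed.

Lemma shelling_step a b : index (F b) s < index (F a) s ->
  exists2 v, v \in J a :\: J b & exists2 l, l < index (F a) s &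
    [/\ facet face (nth set0 s l), F a :\ v \subset nth set0 s l & ~~ (nth set0 s l \subset F a)].
Proof.
move=> ba; have a_s : index (F a) s < size s by rewrite index_mem F_in_s.
have [v [vab [l [la Hl]]]] := s_shell ba a_s.
rewrite !nth_index ?F_in_s // in vab Hl.
have Hfacet : facet face (nth set0 s l) by apply/s_facets; rewrite mem_nth // (ltn_trans la).
exists v.
  case/setDP: vab; rewrite !in_setU => + /norP[/norP[nKs nX] nJb].
  by rewrite (negbTE nKs) (negbTE nX) => vJa; apply/setDP.
exists l => //; split => //.
  apply/subsetP => w /setD1P[wv wF]; apply/negPn/negP => wH.
  have : w \in F a :\: nth set0 s l by rewrite in_setD wH.
  by rewrite Hl inE (negbTE wv).
apply/negP => HF; have EH := Hfacet.2 _ (@faceF a) HF.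
have l_s : l < size s := ltn_trans la a_s.
by move: la; rewrite EH index_uniq ?ltnn.
Qed.

Lemma shelling_exchange a b : index (F b) s < index (F a) s ->
  n = k.*2.+1 /\
  (yv a \notin J b /\ index (F (a + 2)) s < index (F a) s \/
   yv (a + (k.*2 - 2)) \notin J b /\ index (F (a + (k.*2 - 1))) s < index (F a) s).
Proof.
move=> ba; have [v /setDP[vJa vJb] [l la [Hfacet sFH nHF]]] := shelling_step ba.
have l_s : l < size s by rewrite (ltn_trans la) // index_mem F_in_s.
have [nk [[Ev EH] | [Ev EH]]] := F_neighbour Hfacet vJa sFH nHF.
  by split => //; left; rewrite -Ev -EH index_uniq.
by split => //; right; rewrite -Ev -EH index_uniq.
Qed.

Lemma no_last_F c : ~ (forall a, index (F a) s <= index (F c) s).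
Proof.
move=> c_last.
have before a x : yv x \in J c -> yv x \notin J a -> index (F a) s < index (F c) s.
  by move=> xc xa; rewrite ltn_neqAle c_last andbT eq_sym (index_F_neq xc xa).
(* [F (c + 1)] precedes [F c], so the exchange lemma already forces [n] odd. *)
have nk : n = k.*2.+1.
  apply: (shelling_exchange (@before (c + 1) c _ _)).1.
    by rewrite -{1}(addn0 c) mem_J //; [lia | exact: n_gt0].
  by rewrite -(@yv_wrap (c + 1 + (n - 1)) c) ?mem_J; lia.
have k3 : 3 <= k by case: n_ne35 => /eqP n3 /eqP n5; lia.
have F_c x : x = c + n -> F x = F c by move=> ->; rewrite F_wrap.
(* Here [c + (k.*2 - 1)] stands for [c - 2]. *)
case: (ltngtP (index (F (c + 2)) s) (index (F (c + (k.*2 - 1))) s)) => [AB | BA | AB].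
- have [_ [[_ lt_B] | [yB _]]] := shelling_exchange AB.
    by move: lt_B; rewrite F_c; [rewrite ltnNge c_last | lia].
  by move: yB; rewrite (@yv_wrap _ (c + 2 + (k.*2 - 6))) ?mem_J; lia.
- have [_ [[yA _] | [_ lt_A]]] := shelling_exchange BA.
    by move: yA; rewrite -(@yv_wrap (c + (k.*2 - 1) + 4) (c + 2)) ?mem_J; lia.
  by move: lt_A; rewrite F_c; [rewrite ltnNge c_last | lia].
- move/eqP: AB; apply/negP; apply: (@index_F_neq _ _ (c + k.*2)).
    by rewrite (_ : c + k.*2 = c + 2 + (k.*2 - 2)) ?mem_J; lia.
  by rewrite (_ : c + k.*2 = c + (k.*2 - 1) + 1) ?mem_J; lia.
Qed.

End Shelling.

Lemma CF_not_shellable : ~ shellable face.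
Proof.
move=> [s [s_uniq s_facets s_shell]].
have [c _ c_last] := @arg_maxnP _ (Ordinal n_gt0) predT (fun c : 'I_n => index (F c) s) isT.
apply: (no_last_F s_uniq s_facets s_shell (c := c)) => a.
by rewrite -F_mod; apply: (c_last (Ordinal (ltn_pmod a n_gt0))).
Qed.

End GntComplement.
End AttachedCliques.

Theorem corollary4p5 (T : finType) (e : rel T)
  (e_sym : symmetric e) (e_irr : irreflexive e)
  (S : {set T}) (t : nat) (t_ge3 : 3 <= t)
  (n : nat) (n_ge3 : 3 <= n) (n_ne : n != 3 /\ n != 5)
  (t_gt : (n.+1)./2 < t)
  (iso : induced_iso_Gnt e S n t)
  (m : T -> nat) (m_ge : forall v, v \in S -> t <= (m v).+1) :
  ~ shellable (CF_face (Cl_adj e S m) t).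
Proof.
case: iso => f [f_inj f_img f_adj].
have t_gt0 : 0 < t by apply: leq_trans t_ge3.
exact: (CF_not_shellable e_sym t_gt0 m_ge n_ge3 n_ne t_gt f_inj f_img f_adj).
Qed.
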